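(* Let $Q$ be as in the context and $\kappa_1,\kappa_2$ weight functions. Then $\mathfrak B^*_{\max(\kappa_1,\kappa_2)}(Q)=\mathfrak B^*_{\kappa_1}(Q)\cup\mathfrak B^*_{\kappa_2}(Q)$, and this set is the least element (with respect to inclusion) of the family $\mathscr B^*(Q)=\{\mathfrak B^*_\kappa(Q):\kappa\text{ a weight function}\}$ containing both $\mathfrak B^*_{\kappa_1}(Q)$ and $\mathfrak B^*_{\kappa_2}(Q)$. In particular, if $\mathfrak B^*_{\kappa_i}(Q)=\mathfrak B^*_{\kappa_i'}(Q)$ for $i=1,2$, then $\mathfrak B^*_{\max(\kappa_1,\kappa_2)}(Q)=\mathfrak B^*_{\max(\kappa_1',\kappa_2')}(Q)$.
   Context: $\mathbb F\in\{\mathbb R,\mathbb C\}$. $A$ is an infinite-dimensional separable Banach space over $\mathbb F$ and $V_0\subsetneq V_1\subsetneq\cdots\subset A$ are finite-dimensional subspaces whose union $V$ is dense in $A$. $B$ is a Banach space over $\mathbb F$, $\alpha$ a reasonable crossnorm on $A\otimes B$, $A\hat\otimes_\alpha B$ the completion, $Q=((A,V);B;\alpha)$. $E_n(x):=\inf_{h\in V_n\otimes B}\|x-h\|_{A\hat\otimes_\alpha B}$. A weight function is $\kappa:\mathbb N\to(0,\infty)$ with $\sum\kappa(n)<\infty$. $\mathfrak B^*_\kappa(Q)=\{x:\prod_{n\ge1}(E_n(x))^{\kappa(n)}=0\}$ (equivalently $\sum_n\kappa(n)\ln E_n(x)=-\infty$). *)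

From Stdlib Require Import Reals ClassicalEpsilon.
Open Scope R_scope.

(** Real normed vector spaces (complex ones are covered by restricting
    scalars to R: norms, subspaces and distances are unchanged). *)
Record NormedSpace := {
  ns_car :> Type;
  ns_zero : ns_car;
  ns_add : ns_car -> ns_car -> ns_car;
  ns_opp : ns_car -> ns_car;
  ns_scal : R -> ns_car -> ns_car;
  ns_norm : ns_car -> R;
  ns_addA : forall x y z, ns_add x (ns_add y z) = ns_add (ns_add x y) z;
  ns_addC : forall x y, ns_add x y = ns_add y x;
  ns_add0 : forall x, ns_add x ns_zero = x;
  ns_addN : forall x, ns_add x (ns_opp x) = ns_zero;
  ns_scalA : forall a b x, ns_scal a (ns_scal b x) = ns_scal (a * b) x;
  ns_scal1 : forall x, ns_scal 1 x = x;
  ns_scalDr : forall a x y, ns_scal a (ns_add x y) = ns_add (ns_scal a x) (ns_scal a y);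
  ns_scalDl : forall a b x, ns_scal (a + b) x = ns_add (ns_scal a x) (ns_scal b x);
  ns_norm_ge0 : forall x, 0 <= ns_norm x;
  ns_norm_eq0 : forall x, ns_norm x = 0 -> x = ns_zero;
  ns_normZ : forall a x, ns_norm (ns_scal a x) = Rabs a * ns_norm x;
  ns_normD : forall x y, ns_norm (ns_add x y) <= ns_norm x + ns_norm y
}.

Arguments ns_zero {_}.
Arguments ns_add {_}.
Arguments ns_opp {_}.
Arguments ns_scal {_}.
Arguments ns_norm {_}.

Definition ns_dist {X : NormedSpace} (x y : X) : R := ns_norm (ns_add x (ns_opp y)).

Definition complete (X : NormedSpace) : Prop :=
  forall u : nat -> X,
    (forall eps, 0 < eps -> exists N, forall m n, (N <= m)%nat -> (N <= n)%nat ->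
        ns_dist (u m) (u n) < eps) ->
    exists l : X, forall eps, 0 < eps -> exists N, forall n, (N <= n)%nat ->
        ns_dist (u n) l < eps.

Definition is_subspace {X : NormedSpace} (S : X -> Prop) : Prop :=
  S ns_zero /\ (forall x y, S x -> S y -> S (ns_add x y)) /\
  (forall a x, S x -> S (ns_scal a x)).

(** Infimum of a set of reals (chosen classically; meaningful when the set is
    nonempty and bounded below, which is the case for distances). *)
Definition is_inf (P : R -> Prop) (m : R) : Prop :=
  (forall y, P y -> m <= y) /\ (forall m', (forall y, P y -> m' <= y) -> m' <= m).

Definition Rinf (P : R -> Prop) : R := epsilon (inhabits 0) (is_inf P).

Definition Eapprox {X : NormedSpace} (W : nat -> X -> Prop) (n : nat) (x : X) : R :=
  Rinf (fun r => exists h, W n h /\ r = ns_dist x h).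

Definition is_weight (kappa : nat -> R) : Prop :=
  (forall n, 0 < kappa n) /\ exists l, Un_cv (sum_f_R0 kappa) l.

Definition rpow0 (e k : R) : R := if Rlt_dec 0 e then Rpower e k else 0.

Fixpoint pprod (f : nat -> R) (N : nat) : R :=
  match N with
  | O => 1
  | S m => pprod f m * f (S m)
  end.

Definition Bstar {X : NormedSpace} (W : nat -> X -> Prop) (kappa : nat -> R) (x : X) : Prop :=
  Un_cv (pprod (fun n => rpow0 (Eapprox W n x) (kappa n))) 0.

Definition in_Bfamily {X : NormedSpace} (W : nat -> X -> Prop) (S : X -> Prop) : Prop :=
  exists kappa, is_weight kappa /\ forall x, S x <-> Bstar W kappa x.

Definition kmax (k1 k2 : nat -> R) : nat -> R := fun n => Rmax (k1 n) (k2 n).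

(* Since E_n(x) <= ||x||, the approximation numbers of a fixed x form a bounded
   sequence e.  Dividing e by a bound M >= 1 changes each partial product
   prod e_n^{k_n} by the factor M^{k_1 + ... + k_N}, which stays in [1, M^{sum k}]
   for a weight k, so it does not affect convergence to 0.  For factors
   f_n <= 1 the partial products are nonincreasing, f^{max(a,b)} <= f^a, and
   f^a f^b = f^{a+b} <= f^{max(a,b)}; hence the kmax-product tends to 0 iff the
   product of the k1- and k2-products does, iff one of the two monotone factors
   does.  This gives the union formula, from which the rest is immediate. *)
From Stdlib Require Import Reals Lra ClassicalEpsilon FunctionalExtensionality.
Open Scope R_scope.

Definition wprod (e k : nat -> R) : nat -> R := pprod (fun n => rpow0 (e n) (k n)).

Lemma Rpower_1_l c : Rpower 1 c = 1.
Proof. unfold Rpower; rewrite ln_1, Rmult_0_r; apply exp_0. Qed.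

Lemma Rpower_ge1 M c : 1 <= M -> 0 <= c -> 1 <= Rpower M c.
Proof. intros HM Hc; rewrite <- (Rpower_1_l c); apply Rle_Rpower_l; lra. Qed.

Lemma rpow0_ge0 e k : 0 <= rpow0 e k.
Proof. unfold rpow0; destruct (Rlt_dec 0 e); [left; apply exp_pos | lra]. Qed.

Lemma rpow0_le1 f c : f <= 1 -> 0 <= c -> rpow0 f c <= 1.
Proof.
  intros Hf Hc; unfold rpow0; destruct (Rlt_dec 0 f); [|lra].
  rewrite <- (Rpower_1_l c); apply Rle_Rpower_l; lra.
Qed.

Lemma rpow0_plus e a b : rpow0 e (a + b) = rpow0 e a * rpow0 e b.
Proof. unfold rpow0; destruct (Rlt_dec 0 e); [apply Rpower_plus | ring]. Qed.

Lemma rpow0_scale e c k : 0 < c -> rpow0 (e * c) k = rpow0 e k * Rpower c k.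
Proof.
  intro Hc; unfold rpow0.
  destruct (Rlt_dec 0 (e * c)), (Rlt_dec 0 e); try ring.
  - rewrite Rpower_mult_distr; auto.
  - exfalso; nra.
  - exfalso; nra.
Qed.

Lemma rpow0_antitone f a b : f <= 1 -> 0 <= a <= b -> rpow0 f b <= rpow0 f a.
Proof.
  intros Hf Hab; replace b with (a + (b - a)) by ring; rewrite rpow0_plus.
  rewrite <- (Rmult_1_r (rpow0 f a)) at 2.
  apply Rmult_le_compat_l; [apply rpow0_ge0 | apply rpow0_le1; lra].
Qed.

Lemma rpow0_mul_le_max f a b : f <= 1 -> 0 <= a -> 0 <= b ->
  rpow0 f a * rpow0 f b <= rpow0 f (Rmax a b).
Proof.
  intros Hf Ha Hb; rewrite <- rpow0_plus; apply rpow0_antitone; auto.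
  split; [apply Rmax_case; lra|].
  apply Rmax_lub; lra.
Qed.

Lemma pprod_ge0 f N : (forall n, 0 <= f n) -> 0 <= pprod f N.
Proof. intro H; induction N; simpl; [lra | apply Rmult_le_pos; auto]. Qed.

Lemma pprod_mul f g N : pprod (fun n => f n * g n) N = pprod f N * pprod g N.
Proof. induction N; simpl; [ring | rewrite IHN; ring]. Qed.

Lemma pprod_le f g N : (forall n, 0 <= f n <= g n) -> pprod f N <= pprod g N.
Proof.
  intro H; induction N; simpl; [lra|].
  apply Rmult_le_compat; [apply pprod_ge0; intro; apply H | apply H | exact IHN | apply H].
Qed.

Lemma pprod_decreasing f : (forall n, 0 <= f n <= 1) -> Un_decreasing (pprod f).
Proof.
  intros H N; simpl; rewrite <- (Rmult_1_r (pprod f N)) at 2.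
  apply Rmult_le_compat_l; [apply pprod_ge0; intro; apply H | apply H].
Qed.

Lemma pprod_ge1 f N : (forall n, 1 <= f n) -> 1 <= pprod f N.
Proof. intro H; induction N; simpl; [lra | specialize (H (S N)); nra]. Qed.

Lemma pprod_Rpower M k N : 1 <= M -> (forall n, 0 <= k n) ->
  pprod (fun n => Rpower M (k n)) N <= Rpower M (sum_f_R0 k N).
Proof.
  intros HM Hk; induction N; simpl.
  - apply Rpower_ge1; auto.
  - rewrite Rpower_plus; apply Rmult_le_compat_r; [left; apply exp_pos | exact IHN].
Qed.

Lemma sum_f_R0_le_limit k l N : (forall n, 0 <= k n) -> Un_cv (sum_f_R0 k) l ->
  sum_f_R0 k N <= l.
Proof.
  intros Hk Hl; apply growing_ineq; auto.
  intro n; simpl; specialize (Hk (S n)); lra.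
Qed.

Lemma cv0_dominated u v C : 0 < C -> (forall n, Rabs (u n) <= C * Rabs (v n)) ->
  Un_cv v 0 -> Un_cv u 0.
Proof.
  intros HC Huv Hv eps Heps.
  destruct (Hv (eps / C)) as [N HN]; [apply Rdiv_lt_0_compat; auto|].
  exists N; intros n Hn; specialize (HN n Hn); specialize (Huv n).
  unfold R_dist in *; rewrite Rminus_0_r in *.
  apply (Rmult_lt_compat_l C) in HN; auto.
  replace (C * (eps / C)) with eps in HN by (field; lra); lra.
Qed.

Lemma cv0_mul_bounded v g C : (forall n, 0 <= v n) -> (forall n, 1 <= g n <= C) ->
  Un_cv (fun n => v n * g n) 0 <-> Un_cv v 0.
Proof.
  intros Hv Hg; assert (HC : 1 <= C) by (specialize (Hg O); lra).
  split; intro H.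
  - apply (cv0_dominated v (fun n => v n * g n) 1 Rlt_0_1); auto.
    intro n; specialize (Hv n); specialize (Hg n).
    rewrite !Rabs_right by nra; nra.
  - apply (cv0_dominated _ v C ltac:(lra)); auto.
    intro n; specialize (Hv n); specialize (Hg n).
    rewrite !Rabs_right by nra; nra.
Qed.

Lemma cv0_product_decreasing u v w :
  (forall n, 0 <= u n) -> (forall n, 0 <= v n) ->
  Un_decreasing u -> Un_decreasing v ->
  (forall n, u n * v n <= w n) -> Un_cv w 0 -> Un_cv u 0 \/ Un_cv v 0.
Proof.
  intros Hu Hv Du Dv Huvw Hw.
  assert (Hlb : forall s, (forall n, 0 <= s n) -> has_lb s).
  { intros s Hs; exists 0; intros r [i ->]; unfold opp_seq; specialize (Hs i); lra. }
  destruct (decreasing_cv u Du (Hlb u Hu)) as [lu Hlu].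
  destruct (decreasing_cv v Dv (Hlb v Hv)) as [lv Hlv].
  assert (Huv0 : Un_cv (fun n => u n * v n) 0).
  { apply (cv0_dominated _ w 1 Rlt_0_1); auto.
    intro n; specialize (Hu n); specialize (Hv n); specialize (Huvw n).
    rewrite !Rabs_right by nra; lra. }
  pose proof (UL_sequence _ _ _ (CV_mult _ _ _ _ Hlu Hlv) Huv0) as Hl.
  destruct (Rmult_integral _ _ Hl) as [-> | ->]; auto.
Qed.

Lemma wprod_antitone f k k' N : (forall n, f n <= 1) -> (forall n, 0 <= k n <= k' n) ->
  wprod f k' N <= wprod f k N.
Proof.
  intros Hf Hk; apply pprod_le; intro n.
  split; [apply rpow0_ge0 | apply rpow0_antitone; auto].
Qed.

Lemma wprod_decreasing f k : (forall n, f n <= 1) -> (forall n, 0 <= k n) ->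
  Un_decreasing (wprod f k).
Proof.
  intros Hf Hk; apply pprod_decreasing; intro n.
  split; [apply rpow0_ge0 | apply rpow0_le1; auto].
Qed.

Lemma wprod_mul_le_kmax f k1 k2 N : (forall n, f n <= 1) ->
  (forall n, 0 <= k1 n) -> (forall n, 0 <= k2 n) ->
  wprod f k1 N * wprod f k2 N <= wprod f (kmax k1 k2) N.
Proof.
  intros Hf Hk1 Hk2; unfold wprod; rewrite <- pprod_mul; apply pprod_le; intro n.
  split; [apply Rmult_le_pos; apply rpow0_ge0 | apply rpow0_mul_le_max; auto].
Qed.

Lemma cv0_wprod_kmax_le1 f k1 k2 : (forall n, f n <= 1) ->
  (forall n, 0 < k1 n) -> (forall n, 0 < k2 n) ->
  Un_cv (wprod f (kmax k1 k2)) 0 <-> Un_cv (wprod f k1) 0 \/ Un_cv (wprod f k2) 0.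
Proof.
  intros Hf Hk1 Hk2; assert (Hwp : forall k N, 0 <= wprod f k N)
    by (intros; apply pprod_ge0; intro; apply rpow0_ge0).
  split.
  - assert (Hk1' : forall n, 0 <= k1 n) by (intro; apply Rlt_le, Hk1).
    assert (Hk2' : forall n, 0 <= k2 n) by (intro; apply Rlt_le, Hk2).
    apply cv0_product_decreasing; auto using wprod_mul_le_kmax, wprod_decreasing.
  - assert (Hdom : forall k, (forall n, 0 < k n <= kmax k1 k2 n) ->
                   Un_cv (wprod f k) 0 -> Un_cv (wprod f (kmax k1 k2)) 0).
    { intros k Hk; apply (cv0_dominated _ _ 1 Rlt_0_1); intro N.
      rewrite !Rabs_right, Rmult_1_l by (apply Rle_ge, Hwp).
      apply wprod_antitone; auto; intro n; specialize (Hk n); lra. }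
    intros [H | H]; [apply (Hdom k1) | apply (Hdom k2)]; auto; intro n; split; auto.
    + apply Rmax_l.
    + apply Rmax_r.
Qed.

Lemma wprod_scale e k M N : 0 < M ->
  wprod e k N = wprod (fun n => e n / M) k N * pprod (fun n => Rpower M (k n)) N.
Proof.
  intro HM; unfold wprod; rewrite <- pprod_mul; apply f_equal2; auto.
  apply functional_extensionality; intro n.
  rewrite <- rpow0_scale by exact HM; f_equal; field; lra.
Qed.

Lemma cv0_wprod_scale e k M : 1 <= M -> is_weight k ->
  Un_cv (wprod e k) 0 <-> Un_cv (wprod (fun n => e n / M) k) 0.
Proof.
  intros HM [Hk [l Hl]].
  assert (Hk0 : forall n, 0 <= k n) by (intro; apply Rlt_le, Hk).
  replace (wprod e k) with (fun N => wprod (fun n => e n / M) k N *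
                                      pprod (fun n => Rpower M (k n)) N)
    by (apply functional_extensionality; intro; symmetry; apply wprod_scale; lra).
  apply cv0_mul_bounded with (C := Rpower M l).
  - intro; apply pprod_ge0; intro; apply rpow0_ge0.
  - intro N; split.
    + apply pprod_ge1; intro; apply Rpower_ge1; auto.
    + eapply Rle_trans; [apply pprod_Rpower; auto|].
      apply Rle_Rpower; auto; apply sum_f_R0_le_limit; auto.
Qed.

Lemma kmax_weight k1 k2 : is_weight k1 -> is_weight k2 -> is_weight (kmax k1 k2).
Proof.
  intros [Hk1 [l1 Hl1]] [Hk2 [l2 Hl2]].
  assert (Hk : forall n, 0 < kmax k1 k2 n)
    by (intro n; unfold kmax; specialize (Hk1 n); pose proof (Rmax_l (k1 n) (k2 n)); lra).
  split; auto.
  destruct (growing_cv (sum_f_R0 (kmax k1 k2))) as [l Hl].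
  - intro n; simpl; specialize (Hk (S n)); lra.
  - exists (l1 + l2); intros r [N ->].
    apply Rle_trans with (sum_f_R0 k1 N + sum_f_R0 k2 N).
    + rewrite <- sum_plus; apply sum_Rle; intros n _; unfold kmax.
      specialize (Hk1 n); specialize (Hk2 n); apply Rmax_lub; lra.
    + apply Rplus_le_compat; apply sum_f_R0_le_limit; auto;
        intro; apply Rlt_le; auto.
  - exists l; exact Hl.
Qed.

Lemma cv0_wprod_kmax e M k1 k2 : 1 <= M -> (forall n, e n <= M) ->
  is_weight k1 -> is_weight k2 ->
  Un_cv (wprod e (kmax k1 k2)) 0 <-> Un_cv (wprod e k1) 0 \/ Un_cv (wprod e k2) 0.
Proof.
  intros HM He Hk1 Hk2.
  rewrite !(cv0_wprod_scale e _ M HM) by (auto using kmax_weight).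
  apply cv0_wprod_kmax_le1; [| apply Hk1 | apply Hk2].
  intro n; unfold Rdiv; rewrite <- (Rinv_r M) by lra.
  apply Rmult_le_compat_r; [left; apply Rinv_0_lt_compat; lra | apply He].
Qed.

Lemma Rinf_le (P : R -> Prop) y : (exists m, forall z, P z -> m <= z) -> P y ->
  Rinf P <= y.
Proof.
  intros [m Hm] Hy.
  assert (Hinf : exists i, is_inf P i).
  { destruct (completeness (fun r => P (- r))) as [s [Hub Hlub]].
    - exists (- m); intros r Hr; specialize (Hm _ Hr); lra.
    - exists (- y); rewrite Ropp_involutive; exact Hy.
    - exists (- s); split.
      + intros z Hz; assert (- z <= s) by (apply Hub; rewrite Ropp_involutive; exact Hz).
        lra.
      + intros m' Hm'; assert (s <= - m'); [|lra].
        apply Hlub; intros r Hr; specialize (Hm' _ Hr); lra. }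
  apply (proj1 (epsilon_spec (inhabits 0) (is_inf P) Hinf)), Hy.
Qed.

Lemma ns_opp_zero (X : NormedSpace) : ns_opp (@ns_zero X) = ns_zero.
Proof.
  pose proof (ns_addN X ns_zero) as H; rewrite ns_addC, ns_add0 in H; exact H.
Qed.

Lemma Eapprox_le_norm (X : NormedSpace) (W : nat -> X -> Prop) n x :
  W n ns_zero -> Eapprox W n x <= ns_norm x.
Proof.
  intro H0; apply Rinf_le.
  - exists 0; intros r [h [_ ->]]; apply ns_norm_ge0.
  - exists ns_zero; split; auto.
    unfold ns_dist; rewrite ns_opp_zero, ns_add0; reflexivity.
Qed.

Lemma Bstar_kmax (X : NormedSpace) (W : nat -> X -> Prop) k1 k2 :
  (forall n, W n ns_zero) -> is_weight k1 -> is_weight k2 ->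
  forall x, Bstar W (kmax k1 k2) x <-> Bstar W k1 x \/ Bstar W k2 x.
Proof.
  intros HW0 Hk1 Hk2 x.
  apply (cv0_wprod_kmax _ (Rmax 1 (ns_norm x))); auto using Rmax_l.
  intro n; eapply Rle_trans; [apply Eapprox_le_norm, HW0 | apply Rmax_r].
Qed.

Theorem proposition2p9
  (X : NormedSpace) (Xcomplete : complete X)
  (W : nat -> X -> Prop)
  (Wsub : forall n, is_subspace (W n))
  (Wmono : forall n x, W n x -> W (S n) x)
  (Wdense : forall x eps, 0 < eps -> exists n h, W n h /\ ns_dist x h < eps)
  (k1 k2 : nat -> R) (hk1 : is_weight k1) (hk2 : is_weight k2) :
  (forall x, Bstar W (kmax k1 k2) x <-> (Bstar W k1 x \/ Bstar W k2 x))
  /\ in_Bfamily W (Bstar W (kmax k1 k2))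
  /\ (forall S, in_Bfamily W S ->
        (forall x, Bstar W k1 x -> S x) -> (forall x, Bstar W k2 x -> S x) ->
        forall x, Bstar W (kmax k1 k2) x -> S x)
  /\ (forall k1' k2', is_weight k1' -> is_weight k2' ->
        (forall x, Bstar W k1 x <-> Bstar W k1' x) ->
        (forall x, Bstar W k2 x <-> Bstar W k2' x) ->
        forall x, Bstar W (kmax k1 k2) x <-> Bstar W (kmax k1' k2') x).
Proof.
  assert (HW0 : forall n, W n ns_zero) by (intro n; apply (Wsub n)).
  pose proof (Bstar_kmax X W k1 k2 HW0 hk1 hk2) as Hunion.
  split; [exact Hunion|]. split; [|split].
  - exists (kmax k1 k2); split; [apply kmax_weight; auto | tauto].
  - intros S _ HS1 HS2 x Hx; apply Hunion in Hx as [Hx | Hx]; auto.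
  - intros k1' k2' hk1' hk2' E1 E2 x.
    rewrite Hunion, (Bstar_kmax X W k1' k2' HW0 hk1' hk2'), E1, E2; tauto.
Qed.
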